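(* Let $m\ge1$, $\lambda=(\lambda_1,\dots,\lambda_m)$ with nonzero real $\lambda_j$, and let $\mathfrak{g}_m(\lambda)$ be the oscillator algebra with basis $P,X_1,\dots,X_m,Y_1,\dots,Y_m,Q$ and the only nonzero brackets $[X_i,Y_j]=\delta_{ij}P$, $[Q,X_j]=\lambda_jY_j$, $[Q,Y_j]=-\lambda_jX_j$; let $G_m(\lambda)$ be the corresponding simply connected oscillator group. For $\varepsilon\in\mathbb{R}$ let $g_\varepsilon$ be the left-invariant metric with $g_\varepsilon(P,P)=g_\varepsilon(Q,Q)=\varepsilon$, $g_\varepsilon(P,Q)=1$, $g_\varepsilon(X_i,X_j)=g_\varepsilon(Y_i,Y_j)=\delta_{ij}$, and all other pairings of basis vectors zero. Every derivation $D$ of $\mathfrak{g}_m(\lambda)$ is written as $DP=\alpha P$, $DX_j=a_jP+\sum_l b^l_jX_l+\sum_l c^l_jY_l$, $DY_j=\tilde a_jP+\sum_l B^l_jX_l+\sum_l C^l_jY_l$, $DQ=\mu P-\sum_l\lambda_la_lX_l-\sum_l\lambda_l\tilde a_lY_l$ with real coefficients. Suppose $g_\varepsilon$ satisfies the solvsoliton equation $\mathrm{ric}=c\,\mathrm{Id}+D$ for some $c\in\mathbb{R}$ and some derivation $D$ of $\mathfrak{g}_m(\lambda)$. Then $\varepsilon=c=0$, $\mu=m/2$, and $\alpha=a_j=\tilde a_j=b^i_j=c^i_j=0$ for all $i,j$. Consequently the left-invariant Lorentzian metric $g_0$ is a steady solvsoliton (i.e. a solvsoliton with $c=0$).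
   Context: $\mathrm{ric}$ is the Ricci operator of $g_\varepsilon$, defined by $g_\varepsilon(\mathrm{ric}X,Y)=\mathrm{Ric}(X,Y)$. A left-invariant pseudo-Riemannian metric on a simply connected solvable Lie group is a solvsoliton if $\mathrm{ric}=c\,\mathrm{Id}+D$ for some $c\in\mathbb{R}$ and some derivation $D$ of the Lie algebra; it is called steady if $c=0$. *)

From HB Require Import structures.
From mathcomp Require Import all_boot all_order all_algebra.
Set Implicit Arguments. Unset Strict Implicit. Unset Printing Implicit Defensive.
Import Order.TTheory GRing.Theory Num.Theory.
Local Open Scope ring_scope.

(* index set of the basis: inl false = P, inl true = Q,
   inr (inl i) = X_(i+1), inr (inr i) = Y_(i+1) *)
Definition idx (m : nat) : finType := (bool + ('I_m + 'I_m))%type.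
Definition eP {m} : idx m := inl false.
Definition eQ {m} : idx m := inl true.
Definition eX {m} (i : 'I_m) : idx m := inr (inl i).
Definition eY {m} (i : 'I_m) : idx m := inr (inr i).

Section Osc.
Variables (R : realFieldType) (m : nat).

Definition vec := idx m -> R.
Definition ebas (a : idx m) : vec := fun k => (k == a)%:R.

(* structure constants: [e_a, e_b] = \sum_k br lam a b k e_k *)
Definition br (lam : 'I_m -> R) (a b k : idx m) : R :=
  match a, b with
  | inr (inl i), inr (inr j) => if (i == j) && (k == eP) then 1 else 0
  | inr (inr j), inr (inl i) => if (i == j) && (k == eP) then -1 else 0
  | inl true, inr (inl j) => if k == eY j then lam j else 0
  | inr (inl j), inl true => if k == eY j then - lam j else 0
  | inl true, inr (inr j) => if k == eX j then - lam j else 0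
  | inr (inr j), inl true => if k == eX j then lam j else 0
  | _, _ => 0
  end.

Definition brv (lam : 'I_m -> R) (u v : vec) : vec :=
  fun k => \sum_a \sum_b u a * v b * br lam a b k.

Definition gm (eps : R) (a b : idx m) : R :=
  match a, b with
  | inl false, inl false => eps
  | inl true, inl true => eps
  | inl _, inl _ => 1
  | inr (inl i), inr (inl j) => (i == j)%:R
  | inr (inr i), inr (inr j) => (i == j)%:R
  | _, _ => 0
  end.

Definition gv (eps : R) (u v : vec) : R := \sum_a \sum_b u a * v b * gm eps a b.

Definition gmx (eps : R) : 'M[R]_#|{: idx m}| :=
  \matrix_(i, j) gm eps (enum_val i) (enum_val j).
Definition ginv (eps : R) (a b : idx m) : R :=
  invmx (gmx eps) (enum_rank a) (enum_rank b).

(* Koszul formula for left-invariant fields: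
   2 g(nabla_a e_b, e_c) = g([a,b],c) - g([b,c],a) + g([c,a],b) *)
Definition koszul (lam : 'I_m -> R) (eps : R) (a b c : idx m) : R :=
  (gv eps (brv lam (ebas a) (ebas b)) (ebas c)
   - gv eps (brv lam (ebas b) (ebas c)) (ebas a)
   + gv eps (brv lam (ebas c) (ebas a)) (ebas b)) / 2.

(* Levi-Civita connection: nabla_{e_a} e_b = \sum_k nab a b k e_k *)
Definition nab (lam : 'I_m -> R) (eps : R) (a b k : idx m) : R :=
  \sum_c koszul lam eps a b c * ginv eps c k.

Definition nabv (lam : 'I_m -> R) (eps : R) (u v : vec) : vec :=
  fun k => \sum_a \sum_b u a * v b * nab lam eps a b k.

Definition curv (lam : 'I_m -> R) (eps : R) (u v w : vec) : vec :=
  fun k => nabv lam eps u (nabv lam eps v w) k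
           - nabv lam eps v (nabv lam eps u w) k
           - nabv lam eps (brv lam u v) w k.

Definition Ric (lam : 'I_m -> R) (eps : R) (b c : idx m) : R :=
  \sum_a curv lam eps (ebas a) (ebas b) (ebas c) a.

(* Ricci operator: g(ric e_a, e_b) = Ric(e_a, e_b);
   ric e_a = \sum_k ricop a k e_k *)
Definition ricop (lam : 'I_m -> R) (eps : R) (a k : idx m) : R :=
  \sum_b Ric lam eps a b * ginv eps b k.

(* a linear map D given by D e_a = \sum_k D a k e_k is a derivation *)
Definition is_derivation (lam : 'I_m -> R) (D : idx m -> idx m -> R) : Prop :=
  forall a b k : idx m,
    \sum_c br lam a b c * D c k
    = \sum_c D a c * br lam c b k + \sum_c D b c * br lam a c k.

Definition solvsoliton_eq (lam : 'I_m -> R) (eps c : R)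
    (D : idx m -> idx m -> R) : Prop :=
  forall a k : idx m, ricop lam eps a k = c * (a == k)%:R + D a k.

Definition is_steady_solvsoliton (lam : 'I_m -> R) (eps : R) : Prop :=
  exists D, is_derivation lam D /\ solvsoliton_eq lam eps 0 D.

End Osc.

From HB Require Import structures.
From mathcomp Require Import all_boot all_order all_algebra.
From mathcomp Require Import ring lra.
Import Order.TTheory GRing.Theory Num.Theory.
Set Implicit Arguments. Unset Strict Implicit. Unset Printing Implicit Defensive.
Local Open Scope ring_scope.

(* For [eps ^+ 2 <> 1] the Gram matrix of [g_eps] is invertible and every
   bracket and every Levi-Civita derivative of two basis vectors is a multiple
   of a single basis vector, so the Ricci operator can be computed in closed
   form: [ric P = (m eps / 2) P], [ric Q = (m / 2) P],
   [ric X_i = - (eps / 2) X_i], [ric Y_i = - (eps / 2) Y_i].  A solvsoliton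
   derivation is then [D = ric - c Id], and the derivation identities for
   [[X_j, Y_j] = P] and [[Q, X_j] = lam_j Y_j] force [eps (m + 2) = 0] and
   [c lam_j = 0].  For [eps = 0] the Ricci operator is itself a derivation. *)

Lemma big_idx (V : nmodType) (m : nat) (F : idx m -> V) :
  \sum_a F a = F eP + F eQ + \sum_i F (eX i) + \sum_i F (eY i).
Proof.
rewrite big_sumType big_bool /= big_sumType addrA; congr (_ + _ + _).
by rewrite addrC.
Qed.

Lemma sum_ifeq_mul (R : pzSemiRingType) (T : finType) (t : T) (v : R) (F : T -> R) :
  \sum_k (if k == t then v else 0) * F k = v * F t.
Proof. by rewrite (bigD1 t) //= eqxx big1 ?addr0 // => k /negbTE ->; rewrite mul0r. Qed.

Lemma sum_natr_eq_mul (R : pzSemiRingType) (T : finType) (t : T) (F : T -> R) :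
  \sum_k (k == t)%:R * F k = F t.
Proof.
by rewrite -[RHS]mul1r -sum_ifeq_mul; apply: eq_bigr => k _; case: (k == t).
Qed.

Lemma sum_const_ord (R : pzSemiRingType) (m : nat) (K : R) (F : 'I_m -> R) :
  (forall i, F i = K) -> \sum_(i < m) F i = m%:R * K.
Proof. by move=> FK; rewrite (eq_bigr (fun=> K)) // sumr_const card_ord mulr_natl. Qed.

Lemma idx_eqLL m (x y : bool) : (inl x == inl y :> idx m) = (x == y). Proof. by []. Qed.
Lemma idx_eqLR m (x : bool) (y : 'I_m + 'I_m) : (inl x == inr y :> idx m) = false.
Proof. by []. Qed.
Lemma idx_eqRL m (x : bool) (y : 'I_m + 'I_m) : (inr y == inl x :> idx m) = false.
Proof. by []. Qed.
Lemma idx_eqXX m (i j : 'I_m) : (eX i == eX j :> idx m) = (i == j). Proof. by []. Qed.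
Lemma idx_eqYY m (i j : 'I_m) : (eY i == eY j :> idx m) = (i == j). Proof. by []. Qed.
Lemma idx_eqXY m (i j : 'I_m) : (eX i == eY j :> idx m) = false. Proof. by []. Qed.
Lemma idx_eqYX m (i j : 'I_m) : (eY i == eX j :> idx m) = false. Proof. by []. Qed.

Definition idx_eqE :=
  (idx_eqLL, idx_eqLR, idx_eqRL, idx_eqXX, idx_eqYY, idx_eqXY, idx_eqYX).

Ltac case_ord_eqs :=
  rewrite /= ?eqxx ?idx_eqE; repeat (match goal with
  | H : is_true (?i != ?i) |- _ => by rewrite eqxx in H
  | H : is_true (?i != ?j) |- context [?i == ?j] => rewrite (negbTE H)
  | H : is_true (?i != ?j) |- context [?j == ?i] => rewrite [j == i]eq_sym (negbTE H)
  | |- context [?i == ?j] => is_var i; is_var j;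
       let E := fresh "E" in case: (eqVneq i j) => E; [subst i|]
  end; rewrite /= ?eqxx ?idx_eqE).

Ltac close_field := rewrite ?mulr1n ?mulr0n ?addr0; solve [done | ring | field; done].

(* Evaluates each sum over ['I_m] whose summand vanishes off a single index
   [j] in context, by [big1] or by splitting off that index with [bigD1]. *)
Ltac eval_ord_sums := repeat first
  [ rewrite big1; [| by move=> ? ?;
       repeat match goal with H : is_true (_ && _) |- _ => case/andP: H => ? ? end;
       case_ord_eqs; close_field]
  | match goal with j : _ |- _ => rewrite (bigD1 j) /=; [| by case_ord_eqs] end ].

Ltac rewrite_sum_const K :=
  rewrite (@sum_const_ord _ _ K); last by move=> i; rewrite eqxx; field.

Section Oscillator.
Variables (R : realFieldType) (m : nat) (lam : 'I_m -> R).

Lemma sum_ebas_mul (x : idx m) (F : idx m -> R) : \sum_a ebas R x a * F a = F x.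
Proof. exact: sum_natr_eq_mul. Qed.

Lemma sum2_ebas_mul (x y : idx m) (F : idx m -> idx m -> R) :
  \sum_a \sum_b ebas R x a * ebas R y b * F a b = F x y.
Proof.
rewrite -(sum_ebas_mul x (fun a => F a y)); apply: eq_bigr => a _.
by rewrite -(sum_ebas_mul y (F a)) mulr_sumr; apply: eq_bigr => b _; rewrite mulrA.
Qed.

Lemma brv_ebas (x y : idx m) k : brv lam (ebas R x) (ebas R y) k = br lam x y k.
Proof. exact: (sum2_ebas_mul x y (fun a b => br lam a b k)). Qed.

Lemma nabv_ebasl eps (x : idx m) (w : vec R m) k :
  nabv lam eps (ebas R x) w k = \sum_b w b * nab lam eps x b k.
Proof.
rewrite /nabv -(sum_ebas_mul x (fun a => \sum_b w b * nab lam eps a b k)).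
by apply: eq_bigr => a _; rewrite mulr_sumr; apply: eq_bigr => b _; rewrite mulrA.
Qed.

Lemma nabv_ebasr eps (u : vec R m) (y : idx m) k :
  nabv lam eps u (ebas R y) k = \sum_a u a * nab lam eps a y k.
Proof.
apply: eq_bigr => a _; rewrite -(sum_ebas_mul y (fun b => u a * nab lam eps a b k)).
by apply: eq_bigr => b _; ring.
Qed.

Lemma gv_ebasr eps (u : vec R m) (y : idx m) :
  gv eps u (ebas R y) = \sum_a u a * gm eps a y.
Proof.
apply: eq_bigr => a _; rewrite -(sum_ebas_mul y (fun b => u a * gm eps a b)).
by apply: eq_bigr => b _; ring.
Qed.

Definition br_tgt (a b : idx m) : idx m :=
  match a, b with
  | inl true, inr (inl j) | inr (inl j), inl true => eY j
  | inl true, inr (inr j) | inr (inr j), inl true => eX j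
  | _, _ => eP
  end.

Definition br_coef (a b : idx m) : R :=
  match a, b with
  | inr (inl i), inr (inr j) => (i == j)%:R
  | inr (inr j), inr (inl i) => - (i == j)%:R
  | inl true, inr (inl j) | inr (inr j), inl true => lam j
  | inr (inl j), inl true | inl true, inr (inr j) => - lam j
  | _, _ => 0
  end.

Lemma br_single a b k :
  br lam a b k = if k == br_tgt a b then br_coef a b else 0.
Proof.
case: a => [[]|[i|i]]; case: b => [[]|[j|j]] //=; try by case: (_ == _).
- by case: (i == j); case: (k == eP).
- by case: (j == i); case: (k == eP); rewrite /= ?oppr0.
Qed.

Lemma sum_br_mul a b (F : idx m -> R) :
  \sum_k br lam a b k * F k = br_coef a b * F (br_tgt a b).
Proof. by rewrite -sum_ifeq_mul; apply: eq_bigr => k _; rewrite br_single. Qed.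

Lemma gv_brv_ebas eps a b c :
  gv eps (brv lam (ebas R a) (ebas R b)) (ebas R c)
  = br_coef a b * gm eps (br_tgt a b) c.
Proof.
rewrite gv_ebasr -(sum_br_mul a b (fun k => gm eps k c)).
by apply: eq_bigr => k _; rewrite brv_ebas.
Qed.

Lemma derivation_bracketXY D (j : 'I_m) :
  is_derivation lam D -> D eP eP = D (eX j) (eX j) + D (eY j) (eY j).
Proof.
move=> derD; have := derD (eX j) (eY j) eP; rewrite sum_br_mul !big_idx /br /=.
by eval_ord_sums; case_ord_eqs; rewrite /= mulr1n mul1r => ->; ring.
Qed.

Lemma derivation_bracketQX D (j : 'I_m) :
  is_derivation lam D ->
  lam j * D (eY j) (eY j) = lam j * (D eQ eQ + D (eX j) (eX j)).
Proof.
move=> derD; have := derD eQ (eX j) (eY j); rewrite sum_br_mul !big_idx /br /=.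
by eval_ord_sums; case_ord_eqs => ->; ring.
Qed.

Definition nab_tgt (a b : idx m) : idx m :=
  match a, b with
  | inl _, inr (inl j) | inr (inl j), inl _ => eY j
  | inl _, inr (inr j) | inr (inr j), inl _ => eX j
  | _, _ => eP
  end.

Definition nab_coef (eps : R) (a b : idx m) : R :=
  match a, b with
  | inl false, inr (inl j) | inr (inl j), inl false => - (eps / 2)
  | inl false, inr (inr j) | inr (inr j), inl false => eps / 2
  | inl true, inr (inl j) => lam j - 1 / 2
  | inl true, inr (inr j) => 1 / 2 - lam j
  | inr (inl j), inl true => - (1 / 2)
  | inr (inr j), inl true => 1 / 2
  | inr (inl i), inr (inr j) => (i == j)%:R / 2
  | inr (inr i), inr (inl j) => - ((i == j)%:R / 2)
  | _, _ => 0
  end.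

Lemma koszulE eps a b c :
  koszul lam eps a b c = nab_coef eps a b * gm eps (nab_tgt a b) c.
Proof.
rewrite /koszul !gv_brv_ebas /br_coef /gm /br_tgt /nab_coef /nab_tgt.
case: a => [[]|[i|i]]; case: b => [[]|[j|j]]; case: c => [[]|[l|l]]; case_ord_eqs.
all: rewrite ?mulr1n ?mulr0n; try field; done.
Qed.

Definition ginv_coef (eps : R) (a b : idx m) : R :=
  match a, b with
  | inl x, inl y => if x == y then eps / (eps ^+ 2 - 1) else - 1 / (eps ^+ 2 - 1)
  | inr (inl i), inr (inl j) | inr (inr i), inr (inr j) => (i == j)%:R
  | _, _ => 0
  end.

Definition Ric_coef (eps : R) (a b : idx m) : R :=
  match a, b with
  | inl false, inl false => m%:R * eps ^+ 2 / 2
  | inl true, inl true => m%:R / 2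
  | inl _, inl _ => m%:R * eps / 2
  | inr (inl i), inr (inl j) | inr (inr i), inr (inr j) => - (eps / 2) * (i == j)%:R
  | _, _ => 0
  end.

Definition ric_coef (eps : R) (a b : idx m) : R :=
  match a, b with
  | inl false, inl false => m%:R * eps / 2
  | inl true, inl false => m%:R / 2
  | inr (inl i), inr (inl j) | inr (inr i), inr (inr j) => - (eps / 2) * (i == j)%:R
  | _, _ => 0
  end.

Section NonDegenerate.
Variables (eps : R).
Hypothesis eps2_neq1 : eps ^+ 2 - 1 != 0.

Lemma gm_ginv_coef (x y : idx m) :
  \sum_c gm eps x c * ginv_coef eps c y = (x == y)%:R.
Proof.
rewrite big_idx /gm /ginv_coef.
by case: x => [[]|[i|i]]; case: y => [[]|[j|j]] /=; eval_ord_sums; case_ord_eqs;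
  close_field.
Qed.

Lemma ginvE (a b : idx m) : ginv eps a b = ginv_coef eps a b.
Proof.
pose G' : 'M[R]_#|{: idx m}| := \matrix_(i, j) ginv_coef eps (enum_val i) (enum_val j).
have gmxG' : @gmx R m eps *m G' = 1%:M.
  apply/matrixP => r s; rewrite !mxE -(inj_eq enum_val_inj) -gm_ginv_coef.
  under eq_bigr do rewrite !mxE.
  rewrite -(big_enum_val (A := {: idx m})
              (fun x => gm eps (enum_val r) x * ginv_coef eps x (enum_val s))).
  by rewrite (eq_bigl (fun=> true)).
have [gmx_unit _] := mulmx1_unit gmxG'.
have invG : invmx (@gmx R m eps) = G' by rewrite -[RHS](mulKmx gmx_unit) gmxG' mulmx1.
by rewrite /ginv invG mxE !enum_rankK.
Qed.

Lemma nabE a b k : nab lam eps a b k = if k == nab_tgt a b then nab_coef eps a b else 0.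
Proof.
rewrite /nab (eq_bigr (fun c => nab_coef eps a b *
  (gm eps (nab_tgt a b) c * ginv_coef eps c k))); last first.
  by move=> c _; rewrite koszulE ginvE mulrA.
by rewrite -mulr_sumr gm_ginv_coef eq_sym; case: (k == _); rewrite ?mulr1 ?mulr0.
Qed.

Lemma curv_ebasE a b c k :
  curv lam eps (ebas R a) (ebas R b) (ebas R c) k =
    nab_coef eps b c * nab lam eps a (nab_tgt b c) k
  - nab_coef eps a c * nab lam eps b (nab_tgt a c) k
  - br_coef a b * nab lam eps (br_tgt a b) c k.
Proof.
rewrite /curv !nabv_ebasl nabv_ebasr.
congr (_ - _ - _).
- rewrite -(sum_ifeq_mul (nab_tgt b c) _ (fun y => nab lam eps a y k)).
  by apply: eq_bigr => y _; rewrite nabv_ebasl sum_ebas_mul nabE.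
- rewrite -(sum_ifeq_mul (nab_tgt a c) _ (fun y => nab lam eps b y k)).
  by apply: eq_bigr => y _; rewrite nabv_ebasl sum_ebas_mul nabE.
- rewrite -(sum_br_mul a b (fun x => nab lam eps x c k)).
  by apply: eq_bigr => y _; rewrite brv_ebas.
Qed.

Lemma RicE b c : Ric lam eps b c = Ric_coef eps b c.
Proof.
rewrite /Ric; under eq_bigr do rewrite curv_ebasE !nabE.
rewrite big_idx /Ric_coef /nab_coef /nab_tgt /br_tgt /br_coef.
case: b => [[]|[j|j]]; case: c => [[]|[l|l]]; case_ord_eqs; eval_ord_sums; case_ord_eqs.
all: rewrite ?mulr1n ?mulr0n ?addr0; try solve [done | ring | field; done].
- by do 2 rewrite_sum_const (1 / 4 : R); field.
- by do 2 rewrite_sum_const (eps / 4); field.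
- by do 2 rewrite_sum_const (eps / 4); field.
- by do 2 rewrite_sum_const (eps ^+ 2 / 4); field.
Qed.

Lemma ricopE a k : ricop lam eps a k = ric_coef eps a k.
Proof.
rewrite /ricop; under eq_bigr do rewrite RicE ginvE.
rewrite big_idx /ric_coef /Ric_coef /ginv_coef.
by case: a => [[]|[j|j]]; case: k => [[]|[l|l]]; case_ord_eqs; eval_ord_sums;
  case_ord_eqs; close_field.
Qed.

Lemma solvsoliton_derivationE c D :
  solvsoliton_eq lam eps c D -> forall a k, D a k = ric_coef eps a k - c * (a == k)%:R.
Proof. by move=> sol a k; rewrite -ricopE sol; ring. Qed.

End NonDegenerate.

Lemma ric_coef0_derivation : is_derivation lam (ric_coef 0).
Proof.
move=> a b k; rewrite sum_br_mul !big_idx /ric_coef /br_coef /br_tgt /br.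
case: a => [[]|[i|i]]; case: b => [[]|[j|j]]; case: k => [[]|[l|l]]; case_ord_eqs;
  eval_ord_sums; case_ord_eqs; close_field.
Qed.

End Oscillator.

Theorem mainTheorem3 (R : realFieldType) (m : nat) (lam : 'I_m -> R)
    (eps c : R) (D : idx m -> idx m -> R) :
  (1 <= m)%N ->
  (forall j, lam j != 0) ->
  eps ^+ 2 != 1 ->
  is_derivation lam D ->
  solvsoliton_eq lam eps c D ->
  (eps = 0 /\ c = 0 /\ D eQ eP = m%:R / 2 /\ D eP eP = 0 /\
   (forall j : 'I_m, D (eX j) eP = 0 /\ D (eY j) eP = 0) /\
   (forall i j : 'I_m, D (eX j) (eX i) = 0 /\ D (eX j) (eY i) = 0)) /\
  is_steady_solvsoliton lam 0.
Proof.
move=> m_gt0 lam_neq0 eps2_neq1 derD solD.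
have eps2B1_neq0 : eps ^+ 2 - 1 != 0 by rewrite subr_eq0.
have DE := solvsoliton_derivationE eps2B1_neq0 solD.
pose j : 'I_m := Ordinal m_gt0.
have XY := derivation_bracketXY j derD; have QX := derivation_bracketQX j derD.
rewrite !DE /ric_coef /= !mulr1 in XY QX.
have /eqP : c * lam j = 0 by lra.
rewrite mulf_eq0 (negbTE (lam_neq0 j)) orbF => /eqP c0; subst c.
have /eqP : eps * (m%:R + 2) = 0 by lra.
have m2_gt0 : 0 < m%:R + 2 :> R by have := ler0n R m; lra.
rewrite mulf_eq0 (negbTE (lt0r_neq0 m2_gt0)) orbF => /eqP eps0.
subst eps; split.
  rewrite !DE /ric_coef /=; do 4! (split; first by ring).
  by split=> [i|i i']; rewrite !DE /ric_coef /=; split; ring.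
exists (ric_coef 0); split; first exact: ric_coef0_derivation.
by move=> a k; rewrite ricopE //; ring.
Qed.
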